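(* Let $\beta\in\mathbb C\setminus\mathbb Z$ and let $Q_+,\widetilde Q_+,Q_-,\widetilde Q_-$ be entire functions such that each of the pairs $(Q_+,Q_-)$, $(\widetilde Q_+,Q_-)$ and $(Q_+,\widetilde Q_-)$ satisfies the QQ system with momentum $\beta$. Then $Q_+=\widetilde Q_+$ and $Q_-=\widetilde Q_-$.
   Context: A pair $(Q_+,Q_-)$ of entire functions satisfies the QQ system with momentum $\beta$ if for all $E\in\mathbb C$: $e^{i\frac{\beta\pi}2}Q_+(iE)Q_-(-iE)-e^{-i\frac{\beta\pi}2}Q_+(-iE)Q_-(iE)=i\,e^{\frac{E\pi}4}$. *)

From Stdlib Require Import Reals ZArith.
From Coquelicot Require Import Coquelicot.
From Coquelicot Require Import Complex.
Open Scope C_scope.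

Definition Cexp (z : C) : C :=
  (exp (Re z) * cos (Im z), exp (Re z) * sin (Im z))%R.

Definition entire (f : C -> C) : Prop :=
  forall z : C, @ex_derive C_AbsRing C_NormedModule f z.

Definition QQ_system (beta : C) (Qp Qm : C -> C) : Prop :=
  forall E : C,
    Cexp (Ci * beta * RtoC PI / 2) * Qp (Ci * E) * Qm (- (Ci * E))
    - Cexp (- (Ci * beta * RtoC PI / 2)) * Qp (- (Ci * E)) * Qm (Ci * E)
    = Ci * Cexp (E * RtoC PI / 4).

(** Subtracting the QQ relations of (Q+, Q-) and (Q~+, Q-) at E and at -E gives a
    linear system for D(iE) Q-(-iE) and D(-iE) Q-(iE), where D = Q+ - Q~+, with
    determinant e^{iβπ} - e^{-iβπ}; it is nonzero because β is not an integer, so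
    D(z) Q-(-z) = 0 for every z.  At a zero -iE of Q- the relations at E and -E
    force e^{iβπ} e^{Eπ/2} = -1, which holds for at most one E on each horizontal
    line.  Hence D vanishes at all but one point of each vertical line, and so
    everywhere by continuity.  Exchanging the roles of Q+ and Q- gives Q- = Q~-. *)

From Stdlib Require Import Reals ZArith Lra Classical FunctionalExtensionality.
From Coquelicot Require Import Coquelicot.
From Coquelicot Require Import Complex.
Open Scope C_scope.

Lemma Cmult_eq_0_r (c u : C) : c <> 0 -> c * u = 0 -> u = 0.
Proof.
  intros Hc H.
  replace u with (/ c * (c * u)) by (field; exact Hc).
  rewrite H; ring.
Qed.

Lemma Ci_mult_opp_Ci (z : C) : Ci * (- (Ci * z)) = z.
Proof. destruct z; apply injective_projections; simpl; ring. Qed.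

(** [C] carries two uniform structures; [ex_derive_continuous] gives continuity
    for the one induced by [C_AbsRing] on the domain. *)
Local Notation Ccontinuous f z :=
  (@continuous (AbsRing_UniformSpace C_AbsRing) C_NormedModule f z).

Lemma continuous_eq0_on_vertical_ray (f : C -> C) (w : C) :
  Ccontinuous f w ->
  (forall t : R, (0 < t)%R -> f (w + Ci * RtoC t) = 0) -> f w = 0.
Proof.
  intros Hf Hray.
  apply (filterlim_locally_unique (F := at_right 0) (fun t => f (w + Ci * RtoC t))).
  - apply (filterlim_comp _ _ _ (fun t => w + Ci * RtoC t) f _
             (@locally (AbsRing_UniformSpace C_AbsRing) w)); [|exact Hf].
    intros P [eps HP]; exists eps; intros t Ht _; apply HP.
    unfold ball in Ht |- *; simpl in Ht |- *.
    unfold AbsRing_ball, abs, minus, plus, opp in Ht |- *; simpl in Ht |- *.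
    replace (w + Ci * RtoC t + - w) with (Ci * RtoC t) by ring.
    rewrite Cmod_mult, Cmod_Ci, Cmod_R.
    rewrite Ropp_0, Rplus_0_r in Ht; lra.
  - apply (filterlim_ext_loc (fun _ : R => RtoC 0)); [|apply filterlim_const].
    exists (mkposreal 1 Rlt_0_1); intros t _ Ht.
    symmetry; exact (Hray t Ht).
Qed.

(** The QQ system with the coefficients [e^{±iβπ/2}] and the right-hand side
    [i e^{Eπ/4}] abstracted to [a], [b] and [F]. *)
Definition QQ_relation (a b : C) (F : C -> C) (Qp Qm : C -> C) : Prop :=
  forall E : C,
    a * Qp (Ci * E) * Qm (- (Ci * E)) - b * Qp (- (Ci * E)) * Qm (Ci * E) = F E.

Definition twisted_odd_at (a b : C) (F : C -> C) (E : C) : Prop :=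
  a * F E + b * F (- E) = 0.

Definition real_shift_unique (P : C -> Prop) : Prop :=
  forall (E : C) (t : R), P E -> P (E + RtoC t) -> t = 0%R.

Lemma real_shift_unique_opp (P : C -> Prop) :
  real_shift_unique P -> real_shift_unique (fun E => P (- E)).
Proof.
  intros HP E t H1 H2.
  replace t with (- (- t))%R by ring.
  rewrite (HP (- E) (- t)%R H1); [ring|].
  replace (- E + RtoC (- t)%R) with (- (E + RtoC t)); [exact H2|].
  apply injective_projections; simpl; ring.
Qed.

Section QQRelation.

Variables (a b : C) (F : C -> C).

Lemma QQ_relation_opp (Qp Qm : C -> C) :
  QQ_relation a b F Qp Qm -> forall E : C,
    a * Qp (- (Ci * E)) * Qm (Ci * E) - b * Qp (Ci * E) * Qm (- (Ci * E)) = F (- E).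
Proof.
  intros H E.
  rewrite <- (H (- E)).
  replace (Ci * - E) with (- (Ci * E)) by ring.
  replace (- - (Ci * E)) with (Ci * E) by ring; reflexivity.
Qed.

Lemma QQ_relation_swap (Qp Qm : C -> C) :
  QQ_relation a b F Qp Qm -> QQ_relation b a (fun E => - F E) Qm Qp.
Proof. intros H E; rewrite <- (H E); ring. Qed.

Lemma twisted_odd_at_of_root (Qp Qm : C -> C) (E : C) :
  QQ_relation a b F Qp Qm -> Qm (- (Ci * E)) = 0 -> twisted_odd_at a b F E.
Proof.
  intros H Hroot; unfold twisted_odd_at.
  rewrite <- (H E), <- (QQ_relation_opp _ _ H E), Hroot; ring.
Qed.

Lemma QQ_relation_diff_mul (Qp Qpt Qm : C -> C) :
  a * a <> b * b ->
  QQ_relation a b F Qp Qm -> QQ_relation a b F Qpt Qm ->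
  forall z : C, (Qp z - Qpt z) * Qm (- z) = 0.
Proof.
  intros Hab H Ht z.
  rewrite <- (Ci_mult_opp_Ci z); set (E := - (Ci * z)).
  apply (Cmult_eq_0_r (a * a - b * b)).
  { intro H0; apply Hab.
    replace (a * a) with (a * a - b * b + b * b) by ring; rewrite H0; ring. }
  (* [a] times the difference of the relations at [E] plus [b] times that at [-E] *)
  transitivity
    (a * ((a * Qp (Ci * E) * Qm (- (Ci * E)) - b * Qp (- (Ci * E)) * Qm (Ci * E))
        - (a * Qpt (Ci * E) * Qm (- (Ci * E)) - b * Qpt (- (Ci * E)) * Qm (Ci * E)))
   + b * ((a * Qp (- (Ci * E)) * Qm (Ci * E) - b * Qp (Ci * E) * Qm (- (Ci * E)))
        - (a * Qpt (- (Ci * E)) * Qm (Ci * E) - b * Qpt (Ci * E) * Qm (- (Ci * E))))).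
  { ring. }
  rewrite (H E), (Ht E), (QQ_relation_opp _ _ H E), (QQ_relation_opp _ _ Ht E); ring.
Qed.

Lemma QQ_relation_unique_l (Qp Qpt Qm : C -> C) :
  a * a <> b * b -> real_shift_unique (twisted_odd_at a b F) ->
  (forall z, Ccontinuous Qp z) ->
  (forall z, Ccontinuous Qpt z) ->
  QQ_relation a b F Qp Qm -> QQ_relation a b F Qpt Qm -> Qp = Qpt.
Proof.
  intros Hab Hsep Cp Cpt H Ht.
  set (D := fun z => Qp z - Qpt z).
  assert (HD : forall z, D z <> 0 -> twisted_odd_at a b F (- (Ci * z))).
  { intros z Hz; apply (twisted_odd_at_of_root Qp Qm _ H).
    rewrite Ci_mult_opp_Ci.
    exact (Cmult_eq_0_r _ _ Hz (QQ_relation_diff_mul _ _ _ Hab H Ht z)). }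
  apply functional_extensionality; intro w.
  enough (Hw : D w = 0).
  { unfold D in Hw; replace (Qpt w) with (Qp w - (Qp w - Qpt w)) by ring.
    rewrite Hw; ring. }
  destruct (classic (D w = 0)) as [|Hw]; [assumption|].
  apply continuous_eq0_on_vertical_ray.
  { exact (@continuous_minus (AbsRing_UniformSpace C_AbsRing) C_AbsRing C_NormedModule
             Qp Qpt w (Cp w) (Cpt w)). }
  intros t Ht0; apply NNPP; intro Hwt.
  assert (Hshift : - (Ci * (w + Ci * RtoC t)) = - (Ci * w) + RtoC t).
  { apply injective_projections; simpl; ring. }
  pose proof (HD _ Hwt) as Hodd; rewrite Hshift in Hodd.
  pose proof (Hsep _ t (HD w Hw) Hodd); lra.
Qed.

End QQRelation.

Lemma twisted_odd_at_swap (a b : C) (F : C -> C) (E : C) :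
  twisted_odd_at b a (fun E => - F E) E -> twisted_odd_at a b F (- E).
Proof.
  unfold twisted_odd_at; intro H.
  replace (- - E) with E by ring.
  transitivity (- (b * - F E + a * - F (- E))); [ring | rewrite H; ring].
Qed.

Lemma QQ_relation_unique_r (a b : C) (F : C -> C) (Qp Qm Qmt : C -> C) :
  a * a <> b * b -> real_shift_unique (twisted_odd_at a b F) ->
  (forall z, Ccontinuous Qm z) ->
  (forall z, Ccontinuous Qmt z) ->
  QQ_relation a b F Qp Qm -> QQ_relation a b F Qp Qmt -> Qm = Qmt.
Proof.
  intros Hab Hsep Cm Cmt H Ht.
  apply (QQ_relation_unique_l b a (fun E => - F E) Qm Qmt Qp); auto using QQ_relation_swap.
  intros E t H1 H2.
  apply (real_shift_unique_opp _ Hsep E t).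
  all: apply twisted_odd_at_swap; assumption.
Qed.

Lemma entire_continuous (f : C -> C) :
  entire f -> forall z, Ccontinuous f z.
Proof. intros Hf z; exact (ex_derive_continuous f z (Hf z)). Qed.

Lemma Cexp_add (u v : C) : Cexp (u + v) = Cexp u * Cexp v.
Proof.
  destruct u as [u1 u2], v as [v1 v2]; unfold Cexp; simpl.
  rewrite exp_plus, cos_plus, sin_plus.
  apply injective_projections; simpl; ring.
Qed.

Lemma Cexp_0 : Cexp 0 = 1.
Proof.
  unfold Cexp; simpl; rewrite exp_0, cos_0, sin_0.
  apply injective_projections; simpl; ring.
Qed.

Lemma Cexp_mul_opp (z : C) : Cexp z * Cexp (- z) = 1.
Proof. rewrite <- Cexp_add, <- Cexp_0; f_equal; ring. Qed.

Lemma Cexp_eq_1 (z : C) :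
  Cexp z = 1 -> Re z = 0%R /\ exists k : Z, Im z = (2 * IZR k * PI)%R.
Proof.
  destruct z as [r s]; unfold Cexp; simpl; intro H.
  pose proof (f_equal fst H) as Hre; pose proof (f_equal snd H) as Him; simpl in Hre, Him.
  pose proof (exp_pos r) as Hpos.
  assert (Hsin : sin s = 0%R) by (apply (Rmult_eq_reg_l (exp r)); lra).
  assert (Hcos : cos s = 1%R).
  { pose proof (sin2_cos2 s) as Hsc; rewrite Hsin in Hsc; unfold Rsqr in Hsc.
    assert (0 < cos s)%R by (destruct (Rlt_or_le 0 (cos s)); [assumption | nra]).
    nra. }
  split.
  - rewrite Hcos, Rmult_1_r in Hre; rewrite <- (ln_exp r), Hre; apply ln_1.
  - assert (Hhalf : sin (s / 2) = 0%R).
    { pose proof (cos_2a_sin (s / 2)) as Hc2.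
      replace (2 * (s / 2))%R with s in Hc2 by field; nra. }
    destruct (sin_eq_0_0 _ Hhalf) as [k Hk]; exists k; lra.
Qed.

Lemma Cexp_sq_neq_opp_sq (beta : C) :
  (forall n : Z, beta <> RtoC (IZR n)) ->
  Cexp (Ci * beta * RtoC PI / 2) * Cexp (Ci * beta * RtoC PI / 2)
  <> Cexp (- (Ci * beta * RtoC PI / 2)) * Cexp (- (Ci * beta * RtoC PI / 2)).
Proof.
  intros Hbeta Heq; set (x := Ci * beta * RtoC PI / 2) in Heq.
  assert (H4 : Cexp (x + x + (x + x)) = 1).
  { rewrite !Cexp_add, Heq at 1.
    transitivity ((Cexp x * Cexp (- x)) * (Cexp x * Cexp (- x))); [ring|].
    rewrite Cexp_mul_opp; ring. }
  destruct (Cexp_eq_1 _ H4) as [Hre [k Him]].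
  destruct beta as [br bi]; unfold x in Hre, Him; simpl in Hre, Him.
  pose proof PI_RGT_0.
  apply (Hbeta k); apply injective_projections; simpl; nra.
Qed.

Lemma twisted_odd_at_Cexp (x E : C) :
  twisted_odd_at (Cexp x) (Cexp (- x)) (fun E => Ci * Cexp (E * RtoC PI / 4)) E ->
  Cexp (x + x + E * RtoC PI / 2) = -1.
Proof.
  unfold twisted_odd_at; intro H.
  replace (- E * RtoC PI / 4) with (- (E * RtoC PI / 4)) in H by field.
  set (c := E * RtoC PI / 4) in H.
  assert (Hsum : Cexp x * Cexp c + Cexp (- x) * Cexp (- c) = 0).
  { apply (Cmult_eq_0_r Ci); [exact Ci_nz | rewrite <- H; ring]. }
  replace (x + x + E * RtoC PI / 2) with (x + c + (x + c)) by (unfold c; field).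
  rewrite !Cexp_add.
  transitivity (Cexp x * Cexp c * (Cexp x * Cexp c + Cexp (- x) * Cexp (- c))
                - (Cexp x * Cexp (- x)) * (Cexp c * Cexp (- c))); [ring|].
  rewrite Hsum, !Cexp_mul_opp; ring.
Qed.

Lemma real_shift_unique_twisted_odd_Cexp (x : C) :
  real_shift_unique
    (twisted_odd_at (Cexp x) (Cexp (- x)) (fun E => Ci * Cexp (E * RtoC PI / 4))).
Proof.
  intros E t H1 H2.
  apply twisted_odd_at_Cexp in H1, H2.
  replace (x + x + (E + RtoC t) * RtoC PI / 2)
    with (x + x + E * RtoC PI / 2 + RtoC (t * PI / 2)) in H2
    by (apply injective_projections; simpl; field).
  rewrite Cexp_add, H1 in H2.
  assert (Hshift : Cexp (RtoC (t * PI / 2)) = 1).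
  { transitivity (- (-1 * Cexp (RtoC (t * PI / 2)))); [ring | rewrite H2; ring]. }
  destruct (Cexp_eq_1 _ Hshift) as [Hre _]; simpl in Hre.
  pose proof PI_RGT_0; nra.
Qed.

Theorem lemma6p2 (beta : C) (Qp Qpt Qm Qmt : C -> C) :
  (forall n : Z, beta <> RtoC (IZR n)) ->
  entire Qp -> entire Qpt -> entire Qm -> entire Qmt ->
  QQ_system beta Qp Qm ->
  QQ_system beta Qpt Qm ->
  QQ_system beta Qp Qmt ->
  Qp = Qpt /\ Qm = Qmt.
Proof.
  intros Hbeta Ep Ept Em Emt H H_pt H_mt.
  pose proof (Cexp_sq_neq_opp_sq beta Hbeta) as Hsq.
  pose proof (real_shift_unique_twisted_odd_Cexp (Ci * beta * RtoC PI / 2)) as Hsep.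
  split.
  - exact (QQ_relation_unique_l _ _ _ Qp Qpt Qm Hsq Hsep
             (entire_continuous _ Ep) (entire_continuous _ Ept) H H_pt).
  - exact (QQ_relation_unique_r _ _ _ Qp Qm Qmt Hsq Hsep
             (entire_continuous _ Em) (entire_continuous _ Emt) H H_mt).
Qed.
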